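(* Fix $n$, and let $\mathcal C_0,\mathcal C_1,\dots,\mathcal C_k$ be subsets of $\{1,\dots,2n\}$ such that each $\mathcal C_i$ is a union of chains $C(u)$ ($u$ odd) and every chain $C(u)$ with $u$ odd in $\{1,\dots,2n\}$ lies in exactly one $\mathcal C_i$. Then $$\prod_{i=1}^k f^*(\mathcal C_i)\le f(n)\le 2^{|\mathcal C_0|}\prod_{i=1}^k f(\mathcal C_i).$$
   Context: A set of positive integers is primitive if no element divides another. For odd $u\le 2n$, $C(u)=\{u,2u,4u,\dots\}\cap\{1,\dots,2n\}$. $f(n)$ is the number of $n$-element primitive subsets of $\{1,\dots,2n\}$. For $X\subseteq\{1,\dots,2n\}$, $f(X)$ is the number of maximum-size primitive subsets of $X$, and $f^*(X)$ is the number of maximum-size primitive subsets $A\subseteq X$ such that every multiple in $\{1,\dots,2n\}$ of every element of $A$ belongs to $X$. *)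

From mathcomp Require Import all_boot.
Set Implicit Arguments. Unset Strict Implicit. Unset Printing Implicit Defensive.

(* The ambient type: 'I_(2n).+1 = {0,...,2n}; the ground set {1,...,2n}
   is the set of its nonzero elements. *)
Notation num n := ('I_(n.*2).+1).

Definition ground (n : nat) : {set num n} := [set x : num n | 0 < val x].

Definition primitive (n : nat) (A : {set num n}) : bool :=
  [forall x in A, forall y in A, (val x %| val y) ==> (x == y)].

(* C(u) = {u, 2u, 4u, ...} ∩ {1,...,2n}  (exponents 0..2n suffice) *)
Definition chain (n : nat) (u : nat) : {set num n} :=
  [set x : num n | (0 < val x) && [exists k : 'I_(n.*2).+1, val x == u * 2 ^ val k]].

Definition fn (n : nat) : nat :=
  #|[set A : {set num n} | [&& A \subset ground n, primitive A & #|A| == n]]|.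

Definition maxprim (n : nat) (X : {set num n}) : nat :=
  \max_(A : {set num n} | (A \subset X) && primitive A) #|A|.

Definition fX (n : nat) (X : {set num n}) : nat :=
  #|[set A : {set num n} | [&& A \subset X, primitive A & #|A| == maxprim X]]|.

Definition fstar (n : nat) (X : {set num n}) : nat :=
  #|[set A : {set num n} | [&& A \subset X, primitive A, #|A| == maxprim X &
      [forall a in A, forall y in ground n, (val a %| val y) ==> (y \in X)]]]|.

From mathcomp Require Import all_boot zify.
Set Implicit Arguments. Unset Strict Implicit. Unset Printing Implicit Defensive.

(* Every x in {1,...,2n} lies in the chain C(u) of its odd part u, and every
   chain meets the top half T = {n+1,...,2n} in exactly one element, while a
   primitive set meets each chain at most once (two elements of a chain divide
   one another).  Hence for a union of chains X the maximum size of a primitive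
   subset of X is |T ∩ X|; these sizes add up to |T| = n, so an n-element
   primitive set A cuts every part C_i in a maximum primitive subset A ∩ C_i.
   The map A |-> (A ∩ C_i)_i is injective, giving the upper bound.  Conversely,
   for f*-sets A_i (i >= 1) the union of T ∩ C_0 and the A_i is primitive:
   a divisor in T has no other multiple in {1,...,2n}, and a divisor in A_i has
   all its multiples in C_i, where A_i is primitive.  This gives the lower bound. *)

Definition odd_part (x : nat) : nat := x %/ 2 ^ logn 2 x.

Lemma odd_partK x : odd_part x * 2 ^ logn 2 x = x.
Proof. by rewrite /odd_part divnK // pfactor_dvdnn. Qed.

Lemma odd_part_odd x : 0 < x -> odd (odd_part x).
Proof.
move=> x_gt0; apply/negP => /negPn even_part.
have : 2 ^ (logn 2 x).+1 %| x.
  by rewrite -{2}(odd_partK x) expnS dvdn_mul // dvdn2.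
by rewrite pfactor_dvdn // ltnn.
Qed.

Lemma odd_part_mul v k : odd v -> odd_part (v * 2 ^ k) = v.
Proof.
move=> odd_v; have v_gt0 : 0 < v by case: v odd_v.
rewrite /odd_part lognM ?expn_gt0 // logn_coprime ?coprime2n // pfactorK //.
by rewrite mulnK // expn_gt0.
Qed.

Lemma odd_part_gt0 x : 0 < x -> 0 < odd_part x.
Proof. by move=> x_gt0; have := odd_part_odd x_gt0; case: (odd_part x). Qed.

Lemma leq_odd_part x : odd_part x <= x.
Proof. exact: leq_div. Qed.

Lemma eq_odd_part_dvdn x y :
  odd_part x = odd_part y -> (x %| y) || (y %| x).
Proof.
move=> eq_xy; rewrite -(odd_partK x) -(odd_partK y) eq_xy.
case: (leqP (logn 2 x) (logn 2 y)) => [|/ltnW] le_xy.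
  by rewrite dvdn_mul // dvdn_exp2l.
by rewrite orbC dvdn_mul // dvdn_exp2l.
Qed.

Lemma in_chain n u (x : num n) :
  odd u -> (x \in chain n u) = (0 < val x) && (odd_part x == u).
Proof.
move=> odd_u; rewrite inE; case: (posnP (val x)) => //= x_gt0.
apply/existsP/eqP => [[e /eqP ->]|<-]; first exact: odd_part_mul.
have log_lt : logn 2 x < (n.*2).+1.
  apply: leq_trans (ltn_expl _ (ltnSn 1)) _.
  apply: leq_trans _ (ltnW (ltn_ord x)).
  by rewrite -{2}(odd_partK x) leq_pmull // odd_part_gt0.
by exists (Ordinal log_lt); rewrite /= odd_partK.
Qed.

Lemma primitiveP n (A : {set num n}) x y :
  primitive A -> x \in A -> y \in A -> val x %| val y -> x = y.
Proof.
move=> /forallP /(_ x) /implyP primA xA yA.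
by move: (primA xA) => /forallP /(_ y) /implyP /(_ yA) /implyP H /H /eqP.
Qed.

Lemma primitiveS n (A B : {set num n}) :
  B \subset A -> primitive A -> primitive B.
Proof.
move=> sBA primA; apply/forallP => x; apply/implyP => xB.
apply/forallP => y; apply/implyP => yB; apply/implyP => dvd_xy; apply/eqP.
exact: primitiveP primA (subsetP sBA _ xB) (subsetP sBA _ yB) dvd_xy.
Qed.

Lemma primitive_odd_part_inj n (A : {set num n}) :
  primitive A -> {in A &, injective (fun x : num n => odd_part x)}.
Proof.
move=> primA x y xA yA /eq_odd_part_dvdn /orP[] dvd.
  exact: primitiveP primA xA yA dvd.
exact/esym/(primitiveP primA yA xA dvd).
Qed.

Definition top n : {set num n} := [set x : num n | n < val x].

Lemma top_sub_ground n : top n \subset ground n.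
Proof. by apply/subsetP => x; rewrite !inE; apply: leq_ltn_trans. Qed.

Lemma card_top n : #|top n| = n.
Proof.
have shift_lt (i : 'I_n) : n.+1 + i < (n.*2).+1 by have := ltn_ord i; lia.
have -> : top n = [set Ordinal (shift_lt i) | i : 'I_n].
  apply/setP => -[x x_lt]; rewrite inE /=; apply/idP/imsetP.
    move=> n_lt_x; have i_lt : x - n.+1 < n by lia.
    by exists (Ordinal i_lt) => //; apply: val_inj => /=; lia.
  by case=> -[i i_lt] _ [->] /=; lia.
rewrite card_imset ?card_ord // => -[i i_lt] [j j_lt] /(congr1 val) /= eq_ij.
by apply: val_inj => /=; lia.
Qed.

Lemma top_primitive n : primitive (top n).
Proof.
apply/forallP => x; apply/implyP; rewrite inE => x_top.
apply/forallP => y; apply/implyP; rewrite inE => y_top.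
apply/implyP => /dvdnP[c y_eq]; apply/eqP/val_inj.
move: (ltn_ord y) x_top y_top; rewrite /= y_eq.
case: c {y_eq} => [|[|c]]; rewrite ?mul0n ?mul1n // => y_lt x_top _.
have : 2 * x <= c.+2 * x by rewrite leq_mul2r orbT.
by move: y_lt x_top; case: x => x' ? /=; lia.
Qed.

Lemma exists_top_mul2exp n v :
  0 < v -> v <= n.*2 -> exists k, n < v * 2 ^ k <= n.*2.
Proof.
have [d] := ubnP (n.*2 - v); elim: d v => [//|d IH] v lt_d v_gt0 v_le.
case: (ltnP n v) => [n_lt_v|v_le_n]; first by exists 0; rewrite muln1 n_lt_v.
have [|||k bounds] := IH (v * 2); try lia.
by exists k.+1; rewrite expnS mulnA.
Qed.

Lemma top_meets_chain n v :
  odd v -> v <= n.*2 -> exists2 t : num n, t \in top n & odd_part t = v.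
Proof.
move=> odd_v v_le; have v_gt0 : 0 < v by case: v odd_v {v_le}.
have [k /andP[n_lt le_2n]] := exists_top_mul2exp v_gt0 v_le.
have lt_2n : v * 2 ^ k < (n.*2).+1 by [].
by exists (Ordinal lt_2n); rewrite ?inE ?odd_part_mul.
Qed.

Definition chain_closed n (X : {set num n}) : Prop :=
  forall x, x \in X -> 0 < val x /\ chain n (odd_part x) \subset X.

Lemma chain_closed_bigcup n (S : {set num n}) :
  (forall u, u \in S -> odd (val u)) ->
  chain_closed (\bigcup_(u in S) chain n (val u)).
Proof.
move=> S_odd x /bigcupP[u uS]; rewrite in_chain ?S_odd // => /andP[x_gt0 /eqP->].
by split => //; apply: bigcup_sup uS.
Qed.

(* Each element of a primitive subset of X is sent to the unique top element
   of its chain; primitivity makes this injective. *)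
Lemma maxprim_chain_closed n (X : {set num n}) :
  chain_closed X -> maxprim X = #|top n :&: X|.
Proof.
move=> closedX; apply/eqP; rewrite eqn_leq; apply/andP; split; last first.
  apply: leq_bigmax_cond.
  by rewrite subsetIr (primitiveS (subsetIl _ _) (top_primitive n)).
apply/bigmax_leqP => B /andP[sBX primB].
pose g (b : num n) := odflt b [pick t in top n :&: X | odd_part t == odd_part b].
have gP b : b \in B -> (g b \in top n :&: X) && (odd_part (g b) == odd_part b).
  move=> bB; have [b_gt0 chain_sub] := closedX b (subsetP sBX _ bB).
  have b_le : odd_part b <= n.*2 := leq_trans (leq_odd_part b) (ltn_ord b).
  have [t t_top t_odd] := top_meets_chain (odd_part_odd b_gt0) b_le.
  rewrite /g; case: pickP => [t' /andP[-> ->] //|/(_ t)].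
  rewrite inE t_top t_odd eqxx andbT /= => /negP[].
  apply: (subsetP chain_sub); rewrite in_chain ?odd_part_odd // t_odd eqxx.
  by move: t_top; rewrite inE andbT; apply: leq_ltn_trans.
rewrite -(card_in_imset (f := g)); last first.
  move=> b1 b2 b1B b2B eq_g; apply: (primitive_odd_part_inj primB b1B b2B) => /=.
  by move: (gP _ b1B) (gP _ b2B) => /andP[_ /eqP<-] /andP[_ /eqP<-]; rewrite eq_g.
apply/subset_leq_card/subsetP => t /imsetP[b bB ->].
by case/andP: (gP _ bB).
Qed.

Lemma card_setI_partition (T I : finType) (C : I -> {set T}) (A : {set T}) :
  (forall x, x \in A -> exists! i, x \in C i) -> #|A| = \sum_i #|A :&: C i|.
Proof.
move=> uniq_part.
have one_part x : x \in A -> \sum_(i | x \in C i) 1 = 1.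
  move=> xA; have [i0 [x_i0 i0_uniq]] := uniq_part x xA.
  rewrite sum1_card -(card1 i0); apply: eq_card => i; rewrite inE /=.
  by apply/idP/eqP => [/i0_uniq ->|->].
rewrite -sum1_card (eq_bigr _ (fun x xA => esym (one_part x xA))).
under eq_bigr do rewrite big_mkcond /=.
rewrite exchange_big; apply: eq_bigr => i _.
by rewrite -big_mkcondr sum1_card; apply: eq_card => x; rewrite !inE.
Qed.

Lemma bigcup_setI_disjoint (T I : finType) (C g : I -> {set T}) j :
  (forall i, g i \subset C i) ->
  (forall i i' x, x \in C i -> x \in C i' -> i = i') ->
  \bigcup_i g i :&: C j = g j.
Proof.
move=> g_sub C_disj; apply/setP => x; rewrite inE.
apply/andP/idP => [[/bigcupP[i _ x_gi] x_Cj]|x_gj].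
  by rewrite -(C_disj _ _ x (subsetP (g_sub i) _ x_gi) x_Cj).
by split; [apply/bigcupP; exists j | apply: (subsetP (g_sub j))].
Qed.

Lemma card_family_ord0 (T : finType) k (F : 'I_k.+1 -> pred T) :
  #|family F| = #|F ord0| * \prod_(i < k.+1 | 0 < val i) #|F i|.
Proof.
rewrite card_family foldrE big_map big_enum /= (bigD1 ord0) //=.
by congr (_ * _); apply: eq_bigl => i; rewrite lt0n.
Qed.

Section ChainPartition.

Variables (n k : nat) (C : 'I_k.+1 -> {set num n}).
Hypothesis C_closed : forall i, chain_closed (C i).
Hypothesis C_partition : forall x, x \in ground n -> exists! i, x \in C i.

Lemma C_sub_ground i : C i \subset ground n.
Proof. by apply/subsetP => x /C_closed[x_gt0 _]; rewrite inE. Qed.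

Lemma C_disjoint i j x : x \in C i -> x \in C j -> i = j.
Proof.
move=> x_i x_j; have [i0 [_ i0_uniq]] := C_partition (subsetP (C_sub_ground i) _ x_i).
by rewrite -(i0_uniq _ x_i) -(i0_uniq _ x_j).
Qed.

Lemma card_setI_C (A : {set num n}) :
  A \subset ground n -> #|A| = \sum_i #|A :&: C i|.
Proof. by move=> sA; apply: card_setI_partition => x /(subsetP sA)/C_partition. Qed.

Lemma sum_maxprim_C : \sum_i maxprim (C i) = n.
Proof.
rewrite -[RHS](card_top n) (card_setI_C (top_sub_ground n)).
by apply: eq_bigr => i _; rewrite maxprim_chain_closed.
Qed.

(* The parts of an n-element primitive set cannot fall short anywhere, since
   the maxima add up to n. *)
Lemma card_setI_C_maxprim (A : {set num n}) i :
  A \subset ground n -> primitive A -> #|A| = n -> #|A :&: C i| = maxprim (C i).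
Proof.
move=> sA primA cardA; apply/eqP; move: i; apply/forallP.
have le_parts j : #|A :&: C j| <= maxprim (C j) ?= iff (#|A :&: C j| == maxprim (C j)).
  apply/leqif_eq/leq_bigmax_cond.
  by rewrite subsetIr (primitiveS (subsetIl _ _) primA).
have := leqif_sum (P := predT) (fun j _ => le_parts j).
by move/eq_leqif <-; rewrite -card_setI_C // cardA sum_maxprim_C.
Qed.

Definition fstar_choice (i : 'I_k.+1) : pred {set num n} :=
  if i == ord0 then mem [set top n :&: C ord0]
  else mem [set A : {set num n} | [&& A \subset C i, primitive A,
    #|A| == maxprim (C i) &
    [forall a in A, forall y in ground n, (val a %| val y) ==> (y \in C i)]]].

Lemma fstar_choice_sub g : g \in family fstar_choice -> forall i, g i \subset C i.
Proof.
move=> /familyP g_fam i; move: (g_fam i); rewrite /fstar_choice; case: eqP => [->|_].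
  by rewrite inE => /eqP->; apply: subsetIr.
by rewrite inE => /and4P[].
Qed.

Lemma fstar_choice_card g i : g \in family fstar_choice -> #|g i| = maxprim (C i).
Proof.
move=> /familyP /(_ i); rewrite /fstar_choice; case: eqP => [->|_]; rewrite inE.
  by move/eqP->; rewrite maxprim_chain_closed.
by case/and4P=> _ _ /eqP.
Qed.

Lemma primitive_bigcup_fstar_choice g :
  g \in family fstar_choice -> primitive (\bigcup_i g i).
Proof.
move=> g_fam; apply/forallP => x; apply/implyP => /bigcupP[i _ x_gi].
apply/forallP => y; apply/implyP => /bigcupP[j _ y_gj].
apply/implyP => dvd_xy; apply/eqP.
have y_Cj := subsetP (fstar_choice_sub g_fam j) _ y_gj.
have y_ground := subsetP (C_sub_ground j) _ y_Cj.
move: (g_fam) => /familyP /(_ i); rewrite /fstar_choice; case: eqP => [_|_].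
  rewrite inE => /eqP g0; move: x_gi; rewrite g0 inE => /andP[x_top _].
  apply: (primitiveP (top_primitive n) x_top _ dvd_xy).
  move: x_top y_ground; rewrite !inE => n_lt_x y_gt0.
  exact: leq_trans n_lt_x (dvdn_leq y_gt0 dvd_xy).
rewrite inE => /and4P[_ prim_gi _ /forallP /(_ x) /implyP /(_ x_gi)].
move=> /forallP /(_ y) /implyP /(_ y_ground) /implyP /(_ dvd_xy) y_Ci.
rewrite -(C_disjoint y_Ci y_Cj) in y_gj.
exact: primitiveP prim_gi x_gi y_gj dvd_xy.
Qed.

Lemma prod_fstar_le_fn : \prod_(i < k.+1 | 0 < val i) fstar (C i) <= fn n.
Proof.
have -> : \prod_(i < k.+1 | 0 < val i) fstar (C i) = #|family fstar_choice|.
  rewrite card_family_ord0 /fstar_choice eqxx cards1 mul1n.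
  by apply: eq_bigr => -[[|i] ?].
have union_inj : {in family fstar_choice &, injective
    (fun g : {ffun 'I_k.+1 -> {set num n}} => \bigcup_i g i)}.
  move=> g1 g2 g1_fam g2_fam eq_union; apply/ffunP => j.
  rewrite -(bigcup_setI_disjoint j (fstar_choice_sub g1_fam) C_disjoint).
  by rewrite -(bigcup_setI_disjoint j (fstar_choice_sub g2_fam) C_disjoint) eq_union.
rewrite -(card_in_imset union_inj); apply/subset_leq_card/subsetP => U.
case/imsetP => g g_fam ->.
have union_sub : \bigcup_i g i \subset ground n.
  by apply/bigcupsP => i _; apply: subset_trans (fstar_choice_sub g_fam i) (C_sub_ground i).
rewrite inE union_sub primitive_bigcup_fstar_choice //= (card_setI_C union_sub).
rewrite -[X in _ == X]sum_maxprim_C; apply/eqP/eq_bigr => j _.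
by rewrite (bigcup_setI_disjoint j (fstar_choice_sub g_fam) C_disjoint) fstar_choice_card.
Qed.

Definition fX_choice (i : 'I_k.+1) : pred {set num n} :=
  if i == ord0 then mem (powerset (C ord0))
  else mem [set A : {set num n} | [&& A \subset C i, primitive A & #|A| == maxprim (C i)]].

Lemma fn_le_prod_fX : fn n <= 2 ^ #|C ord0| * \prod_(i < k.+1 | 0 < val i) fX (C i).
Proof.
have -> : 2 ^ #|C ord0| * \prod_(i < k.+1 | 0 < val i) fX (C i) = #|family fX_choice|.
  rewrite card_family_ord0 /fX_choice eqxx card_powerset.
  by congr (_ * _); apply: eq_bigr => -[[|i] ?].
have bigcup_parts (A : {set num n}) : A \subset ground n -> \bigcup_i (A :&: C i) = A.
  move=> sA; apply/setP => x; apply/bigcupP/idP => [[i _ /setIP[]] //|xA].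
  by have [i [x_i _]] := C_partition (subsetP sA _ xA); exists i; rewrite // inE xA.
rewrite /fn -(card_in_imset (f := fun A : {set num n} => [ffun i => A :&: C i])); last first.
  move=> A1 A2; rewrite !inE => /and3P[s1 _ _] /and3P[s2 _ _] eq_parts.
  rewrite -(bigcup_parts _ s1) -(bigcup_parts _ s2); apply: eq_bigr => i _.
  by move/ffunP: eq_parts => /(_ i); rewrite !ffunE.
apply/subset_leq_card/subsetP => g /imsetP[A].
rewrite inE => /and3P[sA primA /eqP cardA] ->.
apply/familyP => i; rewrite ffunE /fX_choice; case: eqP => [->|_].
  by rewrite powersetE subsetIr.
by rewrite inE subsetIr (primitiveS (subsetIl _ _) primA) card_setI_C_maxprim ?eqxx.
Qed.

End ChainPartition.

Theorem mainTheorem9 (n k : nat) (C : 'I_k.+1 -> {set num n})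
  (Hunion : forall i : 'I_k.+1, exists S : {set num n},
      (forall u, u \in S -> odd (val u)) /\
      C i = \bigcup_(u in S) chain n (val u))
  (Hpart : forall u : num n, 0 < val u -> odd (val u) ->
      exists! i : 'I_k.+1, chain n (val u) \subset C i) :
  \prod_(i < k.+1 | 0 < val i) fstar (C i) <= fn n <=
  2 ^ #|C ord0| * \prod_(i < k.+1 | 0 < val i) fX (C i).
Proof.
have C_closed i : chain_closed (C i).
  by have [S [S_odd ->]] := Hunion i; apply: chain_closed_bigcup.
have C_partition (x : num n) : x \in ground n -> exists! i, x \in C i.
  rewrite inE => x_gt0.
  have u_lt : odd_part x < (n.*2).+1 := leq_ltn_trans (leq_odd_part x) (ltn_ord x).
  have [i [chain_sub i_uniq]] :=
    Hpart (Ordinal u_lt) (odd_part_gt0 x_gt0) (odd_part_odd x_gt0).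
  exists i; split; first by apply: (subsetP chain_sub); rewrite in_chain ?odd_part_odd ?x_gt0 /=.
  by move=> j /C_closed[_]; apply: i_uniq.
by rewrite prod_fstar_le_fn // fn_le_prod_fX.
Qed.
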